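(* Let $n$ be an odd positive integer with $\Phi(n)=\mathcal{F}(n)$. Then $n\in\mathfrak{G}$, i.e. $\sum_{z\in\mathcal{G}_n} z^{\mathcal{F}(n)}\equiv \mathcal{F}(n)\pmod n$ in $\mathbb{Z}[i]/n\mathbb{Z}[i]$.
   Context: For a positive integer $n$, $\mathcal{G}_n=\{a+bi\in\mathbb{Z}[i]/n\mathbb{Z}[i] : a^2+b^2\equiv 1\pmod n\}$ and $\Phi(n)=|\mathcal{G}_n|$. The function $\mathcal{F}$ is defined by $\mathcal{F}(n)=n-1$ if $n\equiv 1\pmod 4$, $\mathcal{F}(n)=n+1$ if $n\equiv 3 \pmod 4$, $\mathcal{F}(n)=n$ otherwise. $\mathfrak{G}=\{n\in\mathbb{N} : \sum_{z\in\mathcal{G}_n} z^{\mathcal{F}(n)}\equiv \mathcal{F}(n)\pmod n\}$. *)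

From mathcomp Require Import all_boot.
Set Implicit Arguments. Unset Strict Implicit. Unset Printing Implicit Defensive.

(* Z[i]/nZ[i] is represented as pairs (a, b) of residues in 'I_n, standing
   for a + b i.  Arithmetic is done on representatives and reduced mod n. *)
Definition gauss (n : nat) : finType := ('I_n * 'I_n)%type.

Definition gmk (n : nat) (Hn : 0 < n) (a b : nat) : gauss n :=
  (Ordinal (ltn_pmod a Hn), Ordinal (ltn_pmod b Hn)).

Definition gzero n (Hn : 0 < n) : gauss n := gmk Hn 0 0.
Definition gone n (Hn : 0 < n) : gauss n := gmk Hn 1 0.

Definition gadd n (Hn : 0 < n) (z w : gauss n) : gauss n :=
  gmk Hn (z.1 + w.1) (z.2 + w.2).

(* (a + b i)(c + d i) = (ac - bd) + (ad + bc) i ; -bd is represented by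
   (n-1) * bd mod n so everything stays in nat. *)
Definition gmul n (Hn : 0 < n) (z w : gauss n) : gauss n :=
  gmk Hn (z.1 * w.1 + (n - 1) * (z.2 * w.2)) (z.1 * w.2 + z.2 * w.1).

Definition gexp n (Hn : 0 < n) (z : gauss n) (k : nat) : gauss n :=
  iter k (gmul Hn z) (gone Hn).

Definition Gn (n : nat) : {set gauss n} :=
  [set z : gauss n | (z.1 ^ 2 + z.2 ^ 2 == 1 %[mod n])].

Definition PhiG (n : nat) : nat := #|Gn n|.

Definition Fn (n : nat) : nat :=
  if n %% 4 == 1 then n - 1 else if n %% 4 == 3 then n + 1 else n.

Definition gsum n (Hn : 0 < n) (A : {set gauss n}) (f : gauss n -> gauss n)
  : gauss n := \big[gadd Hn / gzero Hn]_(z in A) f z.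

Definition inFrakG n (Hn : 0 < n) : Prop :=
  gsum Hn (Gn n) (fun z => gexp Hn z (Fn n)) = gmk Hn (Fn n) 0.

(* The unit circle G_n = { z : |z|^2 = 1 } of Z[i]/nZ[i] is a group under
   multiplication: it contains 1, is closed under products (|zw| = |z||w|),
   and the conjugate a - bi of z = a + bi is its inverse.  By Lagrange's
   theorem every z in G_n satisfies z^Phi(n) = 1, where Phi(n) = |G_n|.  Hence
   when Phi(n) = F(n) each summand z^F(n) equals 1 and the sum over G_n is
   |G_n| = F(n), i.e. n lies in frak G. *)

From HB Require Import structures.
From mathcomp Require Import all_boot all_algebra ring.
Import GRing.Theory Monoid.Theory.
Set Implicit Arguments. Unset Strict Implicit. Unset Printing Implicit Defensive.

Section AbelianLagrange.
Variables (T : finType) (idx : T) (op : Monoid.com_law idx) (A : {set T}).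

Hypothesis A_idx : idx \in A.
Hypothesis A_op : {in A &, forall x y, op x y \in A}.
Hypothesis A_inv : {in A, forall x, exists2 y, y \in A & op y x = idx}.

Lemma inverse_cancel x y : op y x = idx -> cancel (op x) (op y).
Proof.
by move=> yx u; rewrite (mulmA op); apply: etrans (mul1m op u); congr (op _ u).
Qed.

(* Lagrange's theorem for the finite abelian group A: z^|A| = 1.  Writing P
   for the product of all elements of A, multiplication by z permutes A, so
   P = z^|A| * P, and P is invertible. *)
Lemma iter_card_subgroup z : z \in A -> iter #|A| (op z) idx = idx.
Proof.
move=> zA; have [y yA /inverse_cancel zK] := A_inv zA.
pose P := \big[op/idx]_(w in A) w.
have PA : P \in A by apply: (big_ind (fun x => x \in A)).
have [Q _ /inverse_cancel PK] := A_inv PA.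
have inj_z : injective (op z) := can_inj zK.
have stable_z w : (op z w \in A) = (w \in A).
  apply/idP/idP => [zwA|]; last exact: A_op.
  by rewrite -(zK w) A_op.
have P_shift : P = op (iter #|A| (op z) idx) P.
  rewrite {1}/P (reindex_inj inj_z) (eq_bigl _ _ stable_z) /=.
  by rewrite big_split /= big_const.
by apply: (can_inj PK); rewrite (mulm1 op) (mulmC op); exact/esym.
Qed.

End AbelianLagrange.

Section ResidueModel.
Variables (n : nat) (Hn : 0 < n) (Hn1 : 1 < n).
Local Open Scope ring_scope.

Definition gauss_to_Zp (z : gauss n) : 'Z_n * 'Z_n :=
  ((z.1 : nat)%:R, (z.2 : nat)%:R).

(* For n > 1 the residues in 'I_n are exactly the elements of 'Z_n. *)
Lemma gauss_to_Zp_inj : injective gauss_to_Zp.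
Proof.
move=> [a b] [c d] [] /(congr1 (@nat_of_ord _)) + /(congr1 (@nat_of_ord _)).
rewrite !val_Zp_nat // !modn_small // => e1 e2.
by congr pair; apply: val_inj.
Qed.

Lemma gauss_to_Zp_gmk a b : gauss_to_Zp (gmk Hn a b) = (a%:R, b%:R).
Proof. by rewrite /gauss_to_Zp /= !Zp_nat_mod. Qed.

Lemma gauss_to_Zp_gone : gauss_to_Zp (gone Hn) = (1, 0).
Proof. exact: gauss_to_Zp_gmk. Qed.

Lemma gauss_to_Zp_gadd z w : gauss_to_Zp (gadd Hn z w) =
  ((gauss_to_Zp z).1 + (gauss_to_Zp w).1,
   (gauss_to_Zp z).2 + (gauss_to_Zp w).2).
Proof. by rewrite gauss_to_Zp_gmk !natrD. Qed.

(* n - 1 represents -1, so [gmul] is the multiplication of Z[i]/nZ[i]. *)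
Lemma gauss_to_Zp_gmul z w : gauss_to_Zp (gmul Hn z w) =
  ((gauss_to_Zp z).1 * (gauss_to_Zp w).1 - (gauss_to_Zp z).2 * (gauss_to_Zp w).2,
   (gauss_to_Zp z).1 * (gauss_to_Zp w).2 + (gauss_to_Zp z).2 * (gauss_to_Zp w).1).
Proof.
have n_sub1 : ((n - 1)%N%:R : 'Z_n) = -1.
  by rewrite natrB 1?ltnW // pchar_Zp // sub0r.
by rewrite gauss_to_Zp_gmk /= !natrD !natrM n_sub1; congr pair; ring.
Qed.

Lemma gauss_to_Zp_conj (z : gauss n) : gauss_to_Zp (gmk Hn z.1 (n - z.2)%N) =
  ((gauss_to_Zp z).1, - (gauss_to_Zp z).2).
Proof. by rewrite gauss_to_Zp_gmk //= natrB ?pchar_Zp ?sub0r // ltnW. Qed.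

Lemma eqn_mod_Zp a b : (a == b %[mod n])%N = ((a%:R : 'Z_n) == b%:R).
Proof.
apply/eqP/eqP => [e|e]; first by rewrite -Zp_nat_mod // e Zp_nat_mod.
by move: (congr1 (@nat_of_ord _) e); rewrite !val_Zp_nat.
Qed.

Lemma in_Gn z : (z \in Gn n) =
  ((gauss_to_Zp z).1 ^+ 2 + (gauss_to_Zp z).2 ^+ 2 == 1).
Proof. by rewrite inE eqn_mod_Zp natrD !natrX. Qed.

End ResidueModel.

Lemma gauss_small n (z w : gauss n) : n <= 1 -> z = w.
Proof.
case: n z w => [|[|n]] // z w _; first by case: z.1.
by case: z w => [a b] [c d]; rewrite (ord1 a) (ord1 b) (ord1 c) (ord1 d).
Qed.

Lemma gauss_ext n (z w : gauss n) :
  (1 < n -> gauss_to_Zp z = gauss_to_Zp w) -> z = w.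
Proof.
have [/(gauss_small z w) // | Hn1 eq_zw] := leqP n 1.
by apply: (gauss_to_Zp_inj Hn1); apply: eq_zw.
Qed.

Lemma iter_gadd_gone n (Hn : 0 < n) k :
  iter k (gadd Hn (gone Hn)) (gzero Hn) = gmk Hn k 0.
Proof.
elim: k => [|k IH]; first by apply: gauss_ext => Hn1; rewrite /= !(gauss_to_Zp_gmk _ Hn1).
rewrite iterS IH; apply: gauss_ext => Hn1.
rewrite (gauss_to_Zp_gadd _ Hn1) (gauss_to_Zp_gone _ Hn1) !(gauss_to_Zp_gmk _ Hn1).
by rewrite /= addr0 addrC -natr1.
Qed.

Section GaussMonoid.
Variables (n : nat) (Hn : 0 < n).

Lemma gmulA : associative (gmul Hn).
Proof.
move=> x y z; apply: gauss_ext => Hn1.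
by rewrite !gauss_to_Zp_gmul //=; congr pair; ring.
Qed.

Lemma gmulC : commutative (gmul Hn).
Proof.
move=> x y; apply: gauss_ext => Hn1.
by rewrite !gauss_to_Zp_gmul //=; congr pair; ring.
Qed.

Lemma gmul1 : left_id (gone Hn) (gmul Hn).
Proof.
move=> x; apply: gauss_ext => Hn1.
by rewrite gauss_to_Zp_gmul // gauss_to_Zp_gone //=; congr pair; ring.
Qed.

HB.instance Definition _ :=
  Monoid.isComLaw.Build (gauss n) (gone Hn) (gmul Hn) gmulA gmulC gmul1.

End GaussMonoid.

Section UnitCircle.
Variables (n : nat) (Hn : 0 < n) (Hn1 : 1 < n).
Local Open Scope ring_scope.

Lemma Gn_gone : gone Hn \in Gn n.
Proof. by rewrite in_Gn // gauss_to_Zp_gone //= expr0n addr0 expr1n. Qed.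

(* |zw|^2 = |z|^2 |w|^2. *)
Lemma Gn_gmul : {in Gn n &, forall z w, gmul Hn z w \in Gn n}.
Proof.
move=> z w; rewrite !in_Gn // gauss_to_Zp_gmul //.
case: (gauss_to_Zp z) (gauss_to_Zp w) => [a b] [c d] /= /eqP z1 /eqP w1.
by apply/eqP; rewrite -[1]mulr1 -{1}z1 -w1; ring.
Qed.

(* The conjugate a - bi of a point a + bi of the circle is its inverse. *)
Lemma Gn_inv : {in Gn n, forall z, exists2 y, y \in Gn n & gmul Hn y z = gone Hn}.
Proof.
move=> z; rewrite in_Gn // => /eqP z1.
have y_conj := gauss_to_Zp_conj Hn Hn1 z.
exists (gmk Hn z.1 (n - z.2)%N); first by rewrite in_Gn // y_conj /= sqrrN z1.
apply: (gauss_to_Zp_inj Hn1).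
rewrite gauss_to_Zp_gmul // gauss_to_Zp_gone // y_conj.
by move: z1; case: (gauss_to_Zp z) => a b /= <-; congr pair; ring.
Qed.

End UnitCircle.

Lemma gexp_PhiG n (Hn : 0 < n) z : z \in Gn n -> gexp Hn z (PhiG n) = gone Hn.
Proof.
have [n_le1 _ | Hn1] := leqP n 1; first exact: gauss_small.
exact: (iter_card_subgroup (Gn_gone Hn Hn1) (Gn_gmul Hn Hn1) (Gn_inv Hn Hn1)).
Qed.

Theorem mainTheorem15 (n : nat) (Hn : 0 < n) :
  odd n -> PhiG n = Fn n -> inFrakG Hn.
Proof.
move=> _ Phi_F; rewrite /inFrakG /gsum.
rewrite (eq_bigr (fun _ => gone Hn)) => [|z zG]; last by rewrite -Phi_F gexp_PhiG.
by rewrite big_const -Phi_F iter_gadd_gone.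
Qed.
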